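(* Let $R$ be the binary code $RM(1,5)$ with generator matrix whose rows are $1^{32}$, $1^{16}0^{16}$, $(1^80^8)^2$, $(1^40^4)^4$, $(1^20^2)^8$, $(10)^{16}$ (coordinates numbered $1,\ldots,32$), and let $v\in\mathbb{F}_2^{32}$ have support $\{1,2,3,4,5,9,17,29\}$. Then $N_{32}=\langle R,v\rangle$ is a binary $[32,7]$ code that is doubly even, contains the all-ones vector, and whose dual has minimum weight at least $4$, but no Type~II $\mathbb{Z}_4$-code $C$ with $C^{(1)}=N_{32}$ is extremal.
   Context: A $\mathbb{Z}_4$-code of length $n$ is a $\mathbb{Z}_4$-submodule of $\mathbb{Z}_4^n$; it is self-dual if it equals its dual with respect to $x\cdot y=\sum x_iy_i \pmod 4$. The Euclidean weight of $x$ is $n_1(x)+4n_2(x)+n_3(x)$, $n_\alpha(x)$ being the number of coordinates equal to $\alpha$. A Type~II $\mathbb{Z}_4$-code is a self-dual code all of whose codewords have Euclidean weight divisible by $8$; it is extremal if its minimum Euclidean weight equals $8\lfloor n/24\rfloor+8$ (so $16$ for $n=32$). The residue code is $C^{(1)}=\{c\bmod 2: c\in C\}$. $\langle B,v\rangle$ denotes the binary code generated by $B$ and $v$. A binary code is doubly even if all codeword weights are divisible by $4$. *)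

From HB Require Import structures.
From mathcomp Require Import all_boot all_order all_algebra.
Set Implicit Arguments. Unset Strict Implicit. Unset Printing Implicit Defensive.
Import GRing.Theory.
Local Open Scope ring_scope.

(* Coordinates 1..n of the paper are the indices 0..n-1 here. *)

Definition is_Z4code (n : nat) (C : {set 'rV['Z_4]_n}) : Prop :=
  [/\ 0 \in C,
      (forall x y, x \in C -> y \in C -> x + y \in C) &
      (forall (a : 'Z_4) x, x \in C -> a *: x \in C)].

Definition dotZ4 (n : nat) (x y : 'rV['Z_4]_n) : 'Z_4 := (x *m y^T) 0 0.

Definition self_dual (n : nat) (C : {set 'rV['Z_4]_n}) : Prop :=
  C = [set y | [forall x in C, dotZ4 x y == 0]].

Definition ewZ4 (a : 'Z_4) : nat :=
  if val a == 2%N then 4%N else (val a != 0%N : nat).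

Definition eucl_wt (n : nat) (x : 'rV['Z_4]_n) : nat := (\sum_(i < n) ewZ4 (x ord0 i))%N.

Definition typeII (n : nat) (C : {set 'rV['Z_4]_n}) : Prop :=
  [/\ is_Z4code C, self_dual C & forall c, c \in C -> (8 %| eucl_wt c)%N].

Definition extremal (n : nat) (C : {set 'rV['Z_4]_n}) : Prop :=
  (forall c, c \in C -> c != 0 -> (8 * (n %/ 24) + 8 <= eucl_wt c)%N) /\
  (exists2 c, c \in C & (c != 0) && (eucl_wt c == 8 * (n %/ 24) + 8)%N).

Definition red2 (a : 'Z_4) : 'F_2 := (val a)%:R.

Definition residue (n : nat) (C : {set 'rV['Z_4]_n}) : {set 'rV['F_2]_n} :=
  [set map_mx red2 c | c in C].

Definition wt2 (n : nat) (x : 'rV['F_2]_n) : nat := #|[set i | x ord0 i != 0]|.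

Definition bcode (m n : nat) (G : 'M['F_2]_(m, n)) : {set 'rV['F_2]_n} :=
  [set x | (x <= G)%MS].

Definition bdual (n : nat) (B : {set 'rV['F_2]_n}) : {set 'rV['F_2]_n} :=
  [set y | [forall x in B, (x *m y^T) 0 0 == 0]].

Definition doubly_even (n : nat) (B : {set 'rV['F_2]_n}) : Prop :=
  forall x, x \in B -> (4 %| wt2 x)%N.

Definition min_wt_ge (n : nat) (B : {set 'rV['F_2]_n}) (d : nat) : Prop :=
  forall x, x \in B -> x != 0 -> (d <= wt2 x)%N.

Definition N32_row (r : 'I_7) (i : 'I_32) : bool :=
  match val r with
  | 0 => true
  | 1 => (i < 16)%N
  | 2 => ~~ odd (i %/ 8)
  | 3 => ~~ odd (i %/ 4)
  | 4 => ~~ odd (i %/ 2)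
  | 5 => ~~ odd i
  | _ => (val i \in [:: 0; 1; 2; 3; 4; 8; 16; 28])%N
           (* v, support {1,2,3,4,5,9,17,29} in 1-based numbering *)
  end.

(* Generator matrix of N_32 = <R, v>: first 6 rows generate R = RM(1,5). *)
Definition GN32 : 'M['F_2]_(7, 32) := \matrix_(r, i) (N32_row r i)%:R.
Definition GRM15 : 'M['F_2]_(6, 32) := \matrix_(r, i) (N32_row (widen_ord (leqnSn 6) r) i)%:R.

Definition N32 : {set 'rV['F_2]_32} := bcode GN32.

(* The first four properties follow from general facts about a binary code
   spanned by a generator matrix G: a right inverse gives full rank; if G is
   self-orthogonal with doubly-even rows then the code is doubly even (weights
   of sums, [wt2D]); if G spans 1 and has distinct columns, its dual has no
   word of weight 1 or 2 ([dual_min_wt4]).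

   Non-extremality rests on [light_codeword]: if C is self-dual with residue
   code B, then C contains 2y for every y in the dual of B, so a lift c of a
   word v of B can be corrected by such 2y.  For N32 the dual contains, for
   each coordinate j outside supp v and coordinate 6, a word equal to the unit
   vector e_j away from these 9 coordinates; the corrected lift has Euclidean
   weight at most wt v + 4 = 12 < 16.  The N32-specific facts are finite
   computations on the explicit generator matrix. *)

From HB Require Import structures.
From mathcomp Require Import all_boot all_order all_algebra.
Set Implicit Arguments. Unset Strict Implicit. Unset Printing Implicit Defensive.
Import GRing.Theory.
Local Open Scope ring_scope.

Lemma F2_nat (k : nat) : (k%:R : 'F_2) = (odd k)%:R.
Proof. by rewrite -Fp_nat_mod // modn2. Qed.

Lemma F2_bool (a : 'F_2) : a = (a != 0)%:R.
Proof. by case: a => [[|[|k]] ?] //; apply/val_inj. Qed.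

Lemma F2_cases (a : 'F_2) : a = 0 \/ a = 1.
Proof. by rewrite (F2_bool a); case: (_ != 0); [right | left]. Qed.

Lemma F2_boolK (b : bool) : ((b%:R : 'F_2) != 0) = b.
Proof. by case: b. Qed.

Lemma bool_F2_inj (b c : bool) : (b%:R : 'F_2) = c%:R -> b = c.
Proof. by move=> bc; rewrite -(F2_boolK b) bc F2_boolK. Qed.

Lemma F2_nat_eq0 (k : nat) : ((k%:R : 'F_2) == 0) = ~~ odd k.
Proof. by rewrite F2_nat; case: odd. Qed.

Lemma F2_add_eq0 (a b : 'F_2) : (a + b == 0) = (a == b).
Proof. by case: (F2_cases a) => ->; case: (F2_cases b) => ->. Qed.

Definition supp2 (n : nat) (x : 'rV['F_2]_n) : {set 'I_n} := [set i | x ord0 i != 0].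

Lemma card_indicator_sum (n : nat) (A : {set 'I_n}) : #|A| = (\sum_i (i \in A : nat))%N.
Proof. by rewrite -sum1_card big_mkcond; apply: eq_bigr => i _; case: (i \in A). Qed.

Lemma wt2_0 (n : nat) : wt2 (0 : 'rV['F_2]_n) = 0%N.
Proof.
rewrite /wt2 (_ : [set i | _] = set0) ?cards0 //.
by apply/setP => i; rewrite !inE mxE eqxx.
Qed.

Lemma wt2_eq0 (n : nat) (x : 'rV['F_2]_n) : (wt2 x == 0%N) = (x == 0).
Proof.
apply/idP/eqP => [|->]; last by rewrite wt2_0.
rewrite cards_eq0 => /eqP supp0; apply/rowP => i; rewrite mxE.
have : i \notin [set i | x ord0 i != 0] by rewrite supp0 inE.
by rewrite inE negbK => /eqP.
Qed.

Lemma dot2E (n : nat) (x y : 'rV['F_2]_n) :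
  (x *m y^T) 0 0 = #|supp2 x :&: supp2 y|%:R.
Proof.
rewrite card_indicator_sum natr_sum mxE; apply: eq_bigr => i _.
rewrite !inE mxE.
by case: (F2_cases (x ord0 i)) => ->; case: (F2_cases (y ord0 i)) => ->; apply/val_inj.
Qed.

Lemma wt2D (n : nat) (x y : 'rV['F_2]_n) :
  (wt2 (x + y) + 2 * #|supp2 x :&: supp2 y| = wt2 x + wt2 y)%N.
Proof.
have suppD : [set i | (x + y) ord0 i != 0] =
             (supp2 x :|: supp2 y) :\: (supp2 x :&: supp2 y).
  apply/setP => i; rewrite !inE mxE.
  by case: (F2_cases (x ord0 i)) => ->; case: (F2_cases (y ord0 i)) => ->.
have IsubU : supp2 x :&: supp2 y \subset supp2 x :|: supp2 y.
  exact: subset_trans (subsetIl _ _) (subsetUl _ _).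
rewrite /wt2 suppD cardsDS // -cardsUI.
by rewrite mul2n -addnn addnA subnK // subset_leq_card.
Qed.

Lemma dot2_supp (n : nat) (x y : 'rV['F_2]_n) :
  (x *m y^T) 0 0 = \sum_(i in supp2 y) x 0 i.
Proof.
rewrite mxE [RHS]big_mkcond; apply: eq_bigr => i _; rewrite inE mxE.
by case: (F2_cases (y ord0 i)) => ->; rewrite ?mulr0 ?mulr1.
Qed.

Lemma bcodeP (m n : nat) (G : 'M['F_2]_(m, n)) (x : 'rV_n) :
  reflect (exists u : 'rV_m, x = u *m G) (x \in bcode G).
Proof. by rewrite inE; apply: (iffP submxP) => [[u ->] | [u ->]]; exists u. Qed.

Lemma bdual_bcodeE (m n : nat) (G : 'M['F_2]_(m, n)) (y : 'rV_n) :
  (y \in bdual (bcode G)) = (G *m y^T == 0).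
Proof.
rewrite inE; apply/forall_inP/eqP => [y_orth | Gy0 x /bcodeP [u ->]].
  apply/matrixP => r k; rewrite ord1 [RHS]mxE.
  have rG : row r G \in bcode G by rewrite inE row_sub.
  have /eqP := y_orth _ rG.
  by rewrite -row_mul mxE.
by rewrite -mulmxA Gy0 mulmx0 mxE.
Qed.

Lemma bdual_sum (n : nat) (B : {set 'rV['F_2]_n}) (I : finType) (P : pred I)
    (F : I -> 'rV['F_2]_n) :
  (forall i, P i -> F i \in bdual B) -> \sum_(i | P i) F i \in bdual B.
Proof.
move=> F_dual; apply: (big_ind (fun y => y \in bdual B)) => // [|y z].
  by rewrite inE; apply/forall_inP => x _; rewrite trmx0 mulmx0 mxE.
rewrite !inE => /forall_inP y_orth /forall_inP z_orth.
apply/forall_inP => x xB.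
by rewrite raddfD mulmxDr mxE (eqP (y_orth x xB)) (eqP (z_orth x xB)) addr0.
Qed.

Lemma rank_right_inverse (F : fieldType) (m n : nat) (G : 'M[F]_(m, n)) (H : 'M_(n, m)) :
  G *m H = 1%:M -> \rank G = m.
Proof.
move=> GH1; apply/eqP; rewrite eqn_leq rank_leq_row /=.
by rewrite -{1}(mxrank1 F m) -GH1 mxrankM_maxl.
Qed.

(* Self-orthogonal codes spanned by doubly-even vectors are doubly even: by
   wt2D, wt(x + y) = wt x + wt y - 2|supp x /\ supp y|, and the intersection
   has even size because x and y are orthogonal. *)
Lemma self_orthogonal_doubly_even (m n : nat) (G : 'M['F_2]_(m, n)) :
  G *m G^T = 0 -> (forall r, 4 %| wt2 (row r G))%N -> doubly_even (bcode G).
Proof.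
move=> GG0 rowG4 x /bcodeP [u ->]; rewrite mulmx_sum_row.
pose P (y : 'rV_n) := (y <= G)%MS && (4 %| wt2 y)%N.
suff /andP [] : P (\sum_r u 0 r *: row r G) by [].
apply: (big_ind P) => [|y z /andP [yG y4] /andP [zG z4] | r _].
- by rewrite /P sub0mx wt2_0.
- have even_cap : ~~ odd #|supp2 y :&: supp2 z|.
    move: yG zG => /submxP [a ->] /submxP [b ->].
    by rewrite -F2_nat_eq0 -dot2E trmx_mul mulmxA -(mulmxA a) GG0 mulmx0 mul0mx mxE.
  have cap4 : (4 %| 2 * #|supp2 y :&: supp2 z|)%N.
    by rewrite (_ : 4 = 2 * 2)%N // dvdn_pmul2l // dvdn2.
  rewrite /P addmx_sub //= -(dvdn_addl _ cap4) wt2D.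
  exact: dvdn_add.
- by case: (F2_cases (u 0 r)) => ->; rewrite ?scale0r ?scale1r /P ?sub0mx ?wt2_0 ?row_sub ?rowG4.
Qed.

(* If G spans the all-ones word and has pairwise distinct columns, the dual
   code has minimum weight at least 4: orthogonality to 1 forces even weight,
   and a dual word of weight 2 supported on {a, b} would make columns a and b
   of G equal. *)
Lemma dual_min_wt4 (m n : nat) (G : 'M['F_2]_(m, n)) :
  ((const_mx 1 : 'rV_n) <= G)%MS -> injective (fun j => col j G) ->
  min_wt_ge (bdual (bcode G)) 4.
Proof.
move=> oneG col_inj y y_dual y_nz.
have orth (x : 'rV_n) : (x <= G)%MS -> \sum_(i in supp2 y) x 0 i = 0.
  move=> xG; rewrite -dot2_supp; apply/eqP.
  by move: y_dual; rewrite inE => /forall_inP; apply; rewrite inE.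
have S_even : ~~ odd (wt2 y).
  have := orth _ oneG; under eq_bigr do rewrite mxE.
  by rewrite sumr_const => /eqP; rewrite F2_nat_eq0.
have S_nz : wt2 y != 0%N by rewrite wt2_eq0.
rewrite leqNgt; apply/negP => wt_lt4.
have /cards2P [a [b [ab S_ab]]] : wt2 y == 2%N.
  by move: S_nz S_even wt_lt4; case: (wt2 y) => [|[|[|[|k]]]].
have col_ab : col a G = col b G.
  apply/matrixP => r k; rewrite !mxE.
  have /eqP := orth _ (row_sub r G).
  rewrite /supp2 S_ab big_setU1 ?inE //= big_set1 F2_add_eq0 => /eqP.
  by rewrite !mxE.
by move: ab; rewrite (col_inj _ _ col_ab) eqxx.
Qed.

Lemma red2_odd (a : 'Z_4) : red2 a = (odd (val a))%:R.
Proof. by rewrite /red2 F2_nat. Qed.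

Lemma ewZ4_le4 (a : 'Z_4) : (ewZ4 a <= 4)%N.
Proof. by case: a => [[|[|[|[|k]]]] ?]. Qed.

Lemma ewZ4_odd (a : 'Z_4) (b : bool) :
  odd (val a) -> ewZ4 (a + (if b then 2 else 0)) = 1%N.
Proof. by case: a => [[|[|[|[|k]]]] ?] //; case: b. Qed.

Lemma Z4_even_cancel (a : 'Z_4) : ~~ odd (val a) -> a + (if a == 2 then 2 else 0) = 0.
Proof. by case: a => [[|[|[|[|k]]]] ?] //= _; apply/val_inj. Qed.

Definition lift2 (n : nat) (y : 'rV['F_2]_n) : 'rV['Z_4]_n :=
  \row_i (if y ord0 i != 0 then 2 else 0).

Section ResidueCode.

Variables (n : nat) (C : {set 'rV['Z_4]_n}) (B : {set 'rV['F_2]_n}).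
Hypotheses (C_add : forall x y, x \in C -> y \in C -> x + y \in C)
           (C_self_dual : self_dual C) (C_residue : residue C = B).

Lemma residue_lift (v : 'rV['F_2]_n) : v \in B ->
  exists2 c, c \in C & forall i, odd (val (c ord0 i)) = (i \in supp2 v).
Proof.
rewrite -C_residue => /imsetP [c cC ->]; exists c => // i.
by rewrite inE mxE red2_odd F2_boolK.
Qed.

(* 2y lies in C for every y in the dual of the residue code: x . 2y is twice
   the binary inner product of (x mod 2) and y, which is even. *)
Lemma lift2_in (y : 'rV['F_2]_n) : y \in bdual B -> lift2 y \in C.
Proof.
move=> y_dual; rewrite C_self_dual inE; apply/forall_inP => x xC.
have xB : map_mx red2 x \in B by rewrite -C_residue; apply: imset_f.
pose s := (\sum_i val (x ord0 i) * (y ord0 i != 0%R))%N.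
have s_even : ~~ odd s.
  move: y_dual; rewrite inE => /forall_inP /(_ _ xB).
  rewrite mxE -F2_nat_eq0 natr_sum; congr (_ == _); apply: eq_bigr => i _.
  by rewrite !mxE /red2 {1}(F2_bool (y ord0 i)) natrM.
rewrite /dotZ4 mxE (eq_bigr (fun i => (val (x ord0 i) * (y ord0 i != 0))%:R * 2)); last first.
  by move=> i _; rewrite !mxE; case: (y ord0 i != 0); rewrite ?muln1 ?natr_Zp ?muln0 ?mulr0 ?mul0r.
rewrite -mulr_suml -natr_sum -/s -natrM; apply/eqP/val_inj => /=.
by rewrite Zp_nat /= -(even_halfK s_even) -muln2 -mulnA modnMl.
Qed.

(* Lift v to
   c in C and add 2y, with y the sum of those d j for which c_j = 2: this
   clears every coordinate outside supp v and T, leaves the odd coordinates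
   on supp v odd, and yields a nonzero codeword of Euclidean weight at most
   wt v + 4|T|. *)
Theorem light_codeword (v : 'rV['F_2]_n) (T : {set 'I_n}) (d : 'I_n -> 'rV['F_2]_n) :
  v \in B -> v != 0 ->
  (forall j, j \notin supp2 v :|: T -> d j \in bdual B) ->
  (forall j i, j \notin supp2 v :|: T -> i \notin supp2 v :|: T ->
     d j ord0 i = (i == j)%:R) ->
  exists2 c, c \in C & (c != 0) && (eucl_wt c <= wt2 v + 4 * #|T|)%N.
Proof.
move=> vB v_nz d_dual d_unit; set S := supp2 v :|: T.
have [c cC c_odd] := residue_lift vB.
pose y := \sum_(j | (j \notin S) && (c ord0 j == 2)) d j.
have y_dual : y \in bdual B by apply: bdual_sum => j /andP [jS _]; exact: d_dual.
have y_out i : i \notin S -> y ord0 i = (c ord0 i == 2)%:R.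
  move=> iS; rewrite summxE (eq_bigr (fun j => (i == j)%:R)); last first.
    by move=> j /andP [jS _]; rewrite d_unit.
  case: (boolP (c ord0 i == 2)) => ci2.
    rewrite (bigD1 i) ?iS ?ci2 //= eqxx big1 ?addr0 // => j /andP [_ ji].
    by rewrite eq_sym (negbTE ji).
  rewrite big1 // => j /andP [_ cj2]; apply/eqP.
  by rewrite F2_nat_eq0 oddb; apply: contraNN ci2 => /eqP ->.
have c'C : c + lift2 y \in C by apply: C_add => //; exact: lift2_in.
have ew_bound (i : 'I_n) :
    (ewZ4 ((c + lift2 y)%R ord0 i) <= (i \in supp2 v) + 4 * (i \in T))%N.
  rewrite !mxE; case: (boolP (i \in supp2 v)) => iv.
    by rewrite ewZ4_odd ?c_odd.
  case: (boolP (i \in T)) => iT; first exact: ewZ4_le4.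
  have iS : i \notin S by rewrite inE negb_or iv iT.
  by rewrite y_out // F2_boolK Z4_even_cancel ?c_odd.
exists (c + lift2 y) => //; apply/andP; split.
  have /card_gt0P [i vi] : (0 < wt2 v)%N by rewrite lt0n wt2_eq0.
  apply/eqP => /rowP /(_ i); rewrite !mxE => c'0.
  by have := ewZ4_odd (y ord0 i != 0) (etrans (c_odd i) vi); rewrite c'0.
apply: (@leq_trans (\sum_i ((i \in supp2 v) + 4 * (i \in T)))%N).
  by apply: leq_sum => i _; exact: ew_bound.
by rewrite big_split /= -big_distrr /= -!card_indicator_sum.
Qed.

End ResidueCode.

(* Binary matrices given by boolean entry functions; products and transposes
   stay in this form, so identities between them reduce to finite boolean
   computations. *)
Definition bmx (m n : nat) (f : 'I_m -> 'I_n -> bool) : 'M['F_2]_(m, n) :=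
  \matrix_(i, j) (f i j)%:R.

Lemma mul_bmx (m n p : nat) (f : 'I_m -> 'I_n -> bool) (g : 'I_n -> 'I_p -> bool) :
  bmx f *m bmx g = bmx (fun i k => odd (\sum_j (f i j && g j k))).
Proof.
apply/matrixP => i k; rewrite !mxE -F2_nat natr_sum; apply: eq_bigr => j _.
by rewrite !mxE -natrM; case: (f i j); case: (g j k).
Qed.

Lemma tr_bmx (m n : nat) (f : 'I_m -> 'I_n -> bool) : (bmx f)^T = bmx (fun j i => f i j).
Proof. by apply/matrixP => i j; rewrite !mxE. Qed.

Lemma eq_bmx (m n : nat) (f g : 'I_m -> 'I_n -> bool) :
  (forall i j, f i j = g i j) -> bmx f = bmx g.
Proof. by move=> fg; apply/matrixP => i j; rewrite !mxE fg. Qed.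

Lemma bmx0 (m n : nat) : (0 : 'M['F_2]_(m, n)) = bmx (fun _ _ => false).
Proof. by apply/matrixP => i j; rewrite !mxE. Qed.

Lemma bmx1 (n : nat) : (1%:M : 'M['F_2]_n) = bmx (fun i j => i == j).
Proof. by apply/matrixP => i j; rewrite !mxE. Qed.

Lemma row_bmx (m n : nat) (f : 'I_m -> 'I_n -> bool) (r : 'I_m) :
  row r (bmx f) = bmx (fun _ j => f r j).
Proof. by apply/matrixP => i j; rewrite !mxE. Qed.

Lemma wt2_bmx (n : nat) (f : 'I_1 -> 'I_n -> bool) : wt2 (bmx f) = (\sum_i f ord0 i)%N.
Proof.
rewrite /wt2 card_indicator_sum; apply: eq_bigr => i _.
by rewrite !inE mxE F2_boolK.
Qed.

Lemma sum_iota (n : nat) (F : nat -> nat) :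
  (\sum_(i < n) F i)%N = sumn (map F (iota 0 n)).
Proof. by rewrite -(big_mkord xpredT F) /index_iota subn0 sumnE big_map. Qed.

Lemma all_iota (n : nat) (P : nat -> bool) : all P (iota 0 n) -> forall i : 'I_n, P i.
Proof. by move/allP => P_all i; apply: P_all; rewrite mem_iota /= add0n ltn_ord. Qed.

Lemma all2_iota (m n : nat) (P : nat -> nat -> bool) :
  all (fun a => all (P a) (iota 0 n)) (iota 0 m) -> forall (i : 'I_m) (j : 'I_n), P i j.
Proof. by move=> P_all i; apply: all_iota; move: i; apply: (all_iota P_all). Qed.

Definition N32_entry (r i : nat) : bool :=
  match r with
  | 0 => true
  | 1 => (i < 16)%N
  | 2 => ~~ odd (i %/ 8)
  | 3 => ~~ odd (i %/ 4)
  | 4 => ~~ odd (i %/ 2)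
  | 5 => ~~ odd i
  | _ => (i \in [:: 0; 1; 2; 3; 4; 8; 16; 28])%N
  end.

Lemma GN32E : GN32 = bmx (fun r i => N32_entry r i).
Proof. by []. Qed.

Definition rinv_supports : seq (seq nat) :=
  [:: [:: 31]; [:: 0; 16]; [:: 0; 8]; [:: 0; 4]; [:: 0; 2]; [:: 0; 1]; [:: 0; 1; 4; 5]]%N.

Lemma GN32_right_inverse :
  GN32 *m bmx (fun (i : 'I_32) (s : 'I_7) => ((i : nat) \in nth [::] rinv_supports s)) = 1%:M.
Proof.
rewrite GN32E mul_bmx bmx1; apply: eq_bmx => r s; apply/eqP.
rewrite (sum_iota _ (fun i => N32_entry r i && (i \in nth [::] rinv_supports s))).
move: r s; apply: (all2_iota (P := fun r s =>
  odd (sumn [seq (N32_entry r i && (i \in nth [::] rinv_supports s) : nat) | i <- iota 0 32])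
  == (r == s))).
by vm_compute.
Qed.

Lemma GN32_self_orthogonal : GN32 *m GN32^T = 0.
Proof.
rewrite GN32E tr_bmx mul_bmx bmx0; apply: eq_bmx => r s; apply/negbTE.
rewrite (sum_iota _ (fun i => N32_entry r i && N32_entry s i)).
move: r s; apply: (all2_iota (P := fun r s =>
  ~~ odd (sumn [seq (N32_entry r i && N32_entry s i : nat) | i <- iota 0 32]))).
by vm_compute.
Qed.

Lemma GN32_rows_doubly_even (r : 'I_7) : (4 %| wt2 (row r GN32))%N.
Proof.
rewrite GN32E row_bmx wt2_bmx (sum_iota _ (fun i => N32_entry r i)).
move: r; apply: (all_iota (P := fun r =>
  4 %| sumn [seq (N32_entry r i : nat) | i <- iota 0 32])%N).
by vm_compute.
Qed.

Lemma GN32_row0 : row 0 GN32 = const_mx 1.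
Proof. by apply/matrixP => i j; rewrite !mxE. Qed.

Lemma gen_separates (a b : 'I_32) :
  all (fun r => N32_entry r a == N32_entry r b) (iota 0 7) ==> (a == b :> nat).
Proof.
move: a b; apply: (all2_iota (P := fun a b =>
  all (fun r => N32_entry r a == N32_entry r b) (iota 0 7) ==> (a == b))).
by vm_compute.
Qed.

Lemma GN32_col_inj : injective (fun j => col j GN32).
Proof.
move=> a b /= col_ab; apply/val_inj/eqP; apply: (implyP (gen_separates a b)).
apply/allP => r; rewrite mem_iota add0n => /andP [_ r_lt7].
have := congr1 (fun M : 'cV['F_2]_7 => M (Ordinal r_lt7) 0) col_ab.
by rewrite !mxE => /bool_F2_inj/eqP.
Qed.

Definition vN32 : 'rV['F_2]_32 := row 6 GN32.

Lemma vN32_in : vN32 \in N32.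
Proof. by rewrite inE row_sub. Qed.

Lemma supp_vN32 (i : 'I_32) : (i \in supp2 vN32) = N32_entry 6 i.
Proof. by rewrite inE /vN32 GN32E row_bmx mxE F2_boolK. Qed.

Lemma wt_vN32 : wt2 vN32 = 8%N.
Proof.
by rewrite /vN32 GN32E row_bmx wt2_bmx (sum_iota _ (fun i => N32_entry 6 i)); vm_compute.
Qed.

(* For each
   free j, clearing_word j is supported on j, index 5 and the j-th list below
   (a subset of supp v); it lies in the dual of N32 and restricts to the unit
   vector e_j on the free coordinates. *)
Definition free (j : nat) : bool := ~~ N32_entry 6 j && (j != 5%N).

Definition clearing_supports : seq (seq nat) :=
  [:: [::]; [::]; [::]; [::]; [::]; [::]; [:: 1; 2]; [:: 0; 2]; [::]; [:: 4; 8];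
      [:: 1; 2; 4; 8]; [:: 0; 2; 4; 8]; [:: 1; 8]; [:: 0; 8]; [:: 0; 1; 2; 8];
      [:: 2; 8]; [::]; [:: 4; 16]; [:: 1; 2; 4; 16]; [:: 0; 2; 4; 16]; [:: 1; 16];
      [:: 0; 16]; [:: 0; 1; 2; 16]; [:: 2; 16]; [:: 1; 4; 8; 16]; [:: 0; 4; 8; 16];
      [:: 0; 1; 2; 4; 8; 16]; [:: 2; 4; 8; 16]; [::]; [:: 8; 16]; [:: 1; 2; 8; 16];
      [:: 0; 2; 8; 16]]%N.

Definition clearing_word (j : nat) : 'rV['F_2]_32 :=
  bmx (fun _ i => [|| i == j :> nat, i == 5 :> nat | (i : nat) \in nth [::] clearing_supports j]).

Lemma free_notin (j : 'I_32) : (j \notin supp2 vN32 :|: [set 5]) = free j.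
Proof. by rewrite in_setU supp_vN32 inE negb_or. Qed.

Lemma clearing_word_dual (j : 'I_32) : free j -> clearing_word j \in bdual N32.
Proof.
move=> j_free; rewrite bdual_bcodeE GN32E tr_bmx mul_bmx bmx0.
apply/eqP/eq_bmx => r _; apply/negbTE; move: j_free; apply/implyP.
rewrite (sum_iota _ (fun i =>
  N32_entry r i && [|| i == j, i == 5%N | i \in nth [::] clearing_supports j])).
move: j r; apply: (all2_iota (P := fun j r => free j ==> ~~ odd (sumn
  [seq (N32_entry r i && [|| i == j, i == 5%N | i \in nth [::] clearing_supports j] : nat)
  | i <- iota 0 32]))).
by vm_compute.
Qed.

Lemma clearing_word_unit (j i : 'I_32) :
  free j -> free i -> clearing_word j ord0 i = (i == j)%:R.
Proof.
have unit_check : free j && free i ==>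
    ([|| i == j :> nat, i == 5 :> nat | (i : nat) \in nth [::] clearing_supports j]
     == (i == j :> nat)).
  move: j i; apply: (all2_iota (P := fun j i => free j && free i ==>
    ([|| i == j, i == 5%N | i \in nth [::] clearing_supports j] == (i == j)))).
  by vm_compute.
move=> j_free i_free; move: unit_check; rewrite j_free i_free mxE => /eqP ->.
by rewrite val_eqE.
Qed.

Theorem mainTheorem9 :
  [/\ \rank GN32 = 7%N,
      doubly_even N32,
      const_mx 1 \in N32,
      min_wt_ge (bdual N32) 4
    & forall C : {set 'rV['Z_4]_32},
        typeII C -> residue C = N32 -> ~ extremal C].
Proof.
have ones_sub : ((const_mx 1 : 'rV_32) <= GN32)%MS by rewrite -GN32_row0 row_sub.
split.
- exact: rank_right_inverse GN32_right_inverse.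
- exact: self_orthogonal_doubly_even GN32_self_orthogonal GN32_rows_doubly_even.
- by rewrite inE.
- exact: dual_min_wt4 ones_sub GN32_col_inj.
move=> C [[_ C_add _] C_self_dual _] C_residue [C_min _].
have v_nz : vN32 != 0 by rewrite -wt2_eq0 wt_vN32.
have dual_words j : j \notin supp2 vN32 :|: [set 5] -> clearing_word j \in bdual N32.
  by rewrite free_notin; exact: clearing_word_dual.
have unit_words j i : j \notin supp2 vN32 :|: [set 5] -> i \notin supp2 vN32 :|: [set 5] ->
    clearing_word j ord0 i = (i == j)%:R.
  by rewrite !free_notin; exact: clearing_word_unit.
have [c cC /andP [c_nz c_light]] :=
  light_codeword C_add C_self_dual C_residue vN32_in v_nz dual_words unit_words.
by have := leq_trans (C_min c cC c_nz) c_light; rewrite wt_vN32 cards1.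
Qed.
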